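(* Let $G=\Box_{i=1}^{l}G_i$ be a Cartesian product of stars $G_1,\dots,G_l$, where the vertices of each $G_i$ are labelled $0,1,\dots,|V(G_i)|-1$ with $0$ the star-center of $G_i$, and let $v_G$ be the vertex with coordinates $(0,\dots,0)$. Then for every integer $k\geq 0$, the induced subgraph $\langle N_k^G[v_G]\rangle$ is an isometric subgraph of $G$.
   Context: A star is a connected acyclic graph on vertex set $V$ having a vertex (its star-center) of degree $|V|-1$, all other vertices having degree $1$. The Cartesian product $G\Box H$ has vertex set $V(G)\times V(H)$, with $(g_1,h_1)$ adjacent to $(g_2,h_2)$ iff either $(g_1,g_2)\in E(G)$ and $h_1=h_2$, or $(h_1,h_2)\in E(H)$ and $g_1=g_2$; vertices of $\Box_{i}G_i$ are written as coordinate vectors. $N_k^G[v]=\{x\in V(G): d_G(v,x)\le k\}$ and $\langle N_k^G[v]\rangle$ is the subgraph it induces. A subgraph $H\subseteq G$ is isometric if $d_H(x,y)=d_G(x,y)$ for all $x,y\in V(H)$. *)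

From HB Require Import structures.
From mathcomp Require Import all_boot.
Set Implicit Arguments. Unset Strict Implicit. Unset Printing Implicit Defensive.

(* A (simple, finite) graph is given by its vertex finType and a symmetric
   irreflexive adjacency relation [e : rel T]. *)

Definition walkb (T : finType) (e : rel T) (x y : T) (k : nat) : bool :=
  [exists p : k.-tuple T, path e x p && (last x p == y)].

(* Graph distance d_e(x,y); [None] encodes infinity (x, y disconnected).
   Shortest walks are paths, hence have fewer than #|T| edges, so searching
   lengths 0 .. #|T|-1 finds the minimum when it exists. *)
Definition gdist (T : finType) (e : rel T) (x y : T) : option nat :=
  if has (walkb e x y) (iota 0 #|T|) then Some (find (walkb e x y) (iota 0 #|T|))
  else None.

Definition nbhd (T : finType) (e : rel T) (v : T) (k : nat) : {set T} :=
  [set x | if gdist e v x is Some d then d <= k else false].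

Definition induced (T : finType) (e : rel T) (S : {set T}) : rel T :=
  fun a b => [&& a \in S, b \in S & e a b].

Definition isometric_induced (T : finType) (e : rel T) (S : {set T}) : Prop :=
  forall x y, x \in S -> y \in S -> gdist (induced e S) x y = gdist e x y.

Definition star_rel (m : nat) : rel 'I_m.+1 :=
  fun a b => (a != b) && ((val a == 0) || (val b == 0)).

Definition cart_rel (l : nat) (V : 'I_l -> finType) (E : forall i, rel (V i))
  : rel {dffun forall i : 'I_l, V i} :=
  fun x y => [exists i, E i (x i) (y i) && [forall j, (j != i) ==> (x j == y j)]].

Definition star_prod_rel (l : nat) (n : 'I_l -> nat) : rel {dffun forall i : 'I_l, 'I_(n i).+1} :=
  @cart_rel l (fun i => 'I_(n i).+1) (fun i => @star_rel (n i)).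

Definition star_prod_center (l : nat) (n : 'I_l -> nat)
  : {dffun forall i : 'I_l, 'I_(n i).+1} := [ffun i => ord0].
Arguments star_prod_rel : clear implicits.
Arguments star_prod_center : clear implicits.

From mathcomp Require Import all_boot.
From mathcomp Require Import zify.
Set Implicit Arguments. Unset Strict Implicit. Unset Printing Implicit Defensive.

(* Let D(x,y) = sum_i sd(x_i,y_i), where sd is the distance in a
   star (0 if equal, 1 if one of them is the center, 2 otherwise).  Then:
   - D is 1-Lipschitz along edges of G and D(y,y) = 0, so every walk from x
     to y has at least D(x,y) edges;
   - between any two vertices x, y with D(c,x), D(c,y) <= k (c the center)
     there is a walk with exactly D(x,y) edges staying in that ball: each step
     either moves a non-central disagreeing coordinate of x to the center, or,
     if all disagreeing coordinates of x are central, copies one coordinate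
     of y; neither step leaves the ball.
   Hence d_G = D, the ball {x | D(c,x) <= k} is N_k[c], and the induced
   subgraph on it realises all distances D, i.e. it is isometric. *)

Section Walks.
Variables (T : finType) (e : rel T).

Lemma walkbP x y k :
  reflect (exists p : seq T, [/\ size p = k, path e x p & last x p = y])
          (walkb e x y k).
Proof.
apply: (iffP existsP) => [[p /andP[hp /eqP hl]] | [p [hs hp hl]]].
  by exists (val p); split => //; exact: size_tuple.
have hs' : size p == k by apply/eqP.
by exists (Tuple hs'); rewrite /= hp hl eqxx.
Qed.

(* Removing loops from a walk gives a path, with fewer than #|T| edges. *)
Lemma walkb_shorten x y k :
  walkb e x y k -> exists2 k', k' < #|T| & walkb e x y k'.
Proof.
case/walkbP => p [_ hp]; case: (shortenP hp) => p' hp' hu _ hl.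
exists (size p').
  have := max_card (mem (x :: p')); rewrite (card_uniqP hu) /=; lia.
by apply/walkbP; exists p'; split.
Qed.

Lemma gdist_min x y d :
  walkb e x y d -> (forall m, walkb e x y m -> d <= m) -> gdist e x y = Some d.
Proof.
move=> hw hmin; have [d' hd' hw'] := walkb_shorten hw.
have hdT : d < #|T| by have := hmin _ hw'; lia.
have hhas : has (walkb e x y) (iota 0 #|T|).
  by apply/hasP; exists d => //; rewrite mem_iota; lia.
rewrite /gdist hhas; congr Some.
set j := find _ _.
have hj : j < #|T| by rewrite -[X in _ < X](size_iota 0) -has_find.
have := nth_find 0 hhas; rewrite nth_iota // add0n => /hmin hdj.
case: (ltnP d j) => hd; last by lia.
by have := before_find 0 hd; rewrite nth_iota ?add0n ?hw.
Qed.
End Walks.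

Lemma walkb_sub (T : finType) (e1 e2 : rel T) x y k :
  subrel e1 e2 -> walkb e1 x y k -> walkb e2 x y k.
Proof.
move=> he /walkbP[p [hs hp hl]]; apply/walkbP; exists p; split => //.
exact: sub_path hp.
Qed.

Lemma induced_sub (T : finType) (e : rel T) (S : {set T}) :
  subrel (induced e S) e.
Proof. by move=> a b /and3P[]. Qed.

Section MetricCertificate.
Variables (T : finType) (e : rel T) (D : T -> T -> nat).
Hypothesis D_refl : forall y, D y y = 0.
Hypothesis D_edge : forall x z y, e x z -> D x y <= (D z y).+1.

Lemma walkb_length_lb x y m : walkb e x y m -> D x y <= m.
Proof.
case/walkbP => p [<- hp <-]; elim: p x hp => [|z p IH] x /=.
  by rewrite D_refl.
by case/andP => /(D_edge (last z p)) hxz /IH; lia.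
Qed.

Lemma gdist_metric x y : walkb e x y (D x y) -> gdist e x y = Some (D x y).
Proof. by move=> hw; apply: gdist_min hw _ => m; apply: walkb_length_lb. Qed.

Lemma isometric_of_geodesics (S : {set T}) :
  (forall x y, x \in S -> y \in S -> walkb (induced e S) x y (D x y)) ->
  isometric_induced e S.
Proof.
move=> hgeo x y hx hy; have hw := hgeo x y hx hy.
rewrite (gdist_metric (walkb_sub (@induced_sub _ e S) hw)).
apply: gdist_min hw _ => m /(walkb_sub (@induced_sub _ e S)).
exact: walkb_length_lb.
Qed.
End MetricCertificate.

Definition star_dist (m : nat) (a b : 'I_m.+1) : nat :=
  if val a == val b then 0 else if (val a == 0) || (val b == 0) then 1 else 2.

Section StarDist.
Variable m : nat.
Implicit Types a b : 'I_m.+1.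

Lemma star_dist_edge a b c : star_rel a b -> star_dist a c <= (star_dist b c).+1.
Proof.
rewrite /star_rel /star_dist -val_eqE.
case: (val a =P val b); case: (val b =P val c); case: (val a =P val c);
case: (val a =P 0); case: (val b =P 0); case: (val c =P 0) => //=; lia.
Qed.

Lemma star_distxx a : star_dist a a = 0.
Proof. by rewrite /star_dist eqxx. Qed.

Lemma star_dist_eq0 a b : star_dist a b = 0 -> a = b.
Proof. by rewrite /star_dist; case: eqP => [/val_inj // | _]; case: ifP. Qed.

(* From a leaf, the shortest way to any other vertex goes via the center. *)
Lemma star_dist_leaf a b :
  val a != 0 -> a != b -> star_dist a b = (star_dist ord0 b).+1.
Proof.
rewrite /star_dist -val_eqE /=.
case: (val a =P val b); case: (val a =P 0); case: (val b =P 0);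
case: (0 =P val b) => //=; lia.
Qed.

Lemma star_dist_center a b : val a == 0 -> a != b -> star_dist a b = 1.
Proof. by rewrite /star_dist -val_eqE => -> /negbTE ->. Qed.

Lemma star_dist_center0 b : val b == 0 -> star_dist ord0 b = 0.
Proof. by rewrite /star_dist /= eq_sym => ->. Qed.
End StarDist.

Section StarProduct.
Variables (l : nat) (n : 'I_l -> nat).
Local Notation V := {dffun forall i : 'I_l, 'I_(n i).+1}.
Implicit Types (x y z a : V) (i j : 'I_l).
Local Notation e := (star_prod_rel l n).
Local Notation c := (star_prod_center l n).

Definition prod_dist (x y : V) : nat := \sum_(i < l) star_dist (x i) (y i).

Definition set_coord (x a : V) (i : 'I_l) : V :=
  [ffun j : 'I_l => if j == i then a j else x j].

Lemma set_coordE x a i j : set_coord x a i j = if j == i then a j else x j.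
Proof. by rewrite ffunE. Qed.

Lemma prod_dist_split x y i :
  prod_dist x y = star_dist (x i) (y i) + \sum_(j < l | j != i) star_dist (x j) (y j).
Proof. by rewrite /prod_dist (bigD1 i). Qed.

Lemma prod_dist_set_coord x a y i :
  prod_dist (set_coord x a i) y =
  star_dist (a i) (y i) + \sum_(j < l | j != i) star_dist (x j) (y j).
Proof.
rewrite (prod_dist_split _ _ i) set_coordE eqxx; congr addn.
by apply: eq_bigr => j /negbTE hj; rewrite set_coordE hj.
Qed.

Lemma prod_distxx x : prod_dist x x = 0.
Proof. by rewrite /prod_dist big1 // => i _; rewrite star_distxx. Qed.

Lemma prod_dist_eq0 x y : prod_dist x y = 0 -> x = y.
Proof.
move=> h; apply/ffunP => i; apply: star_dist_eq0.
by move: h; rewrite (prod_dist_split x y i) => /eqP; rewrite addn_eq0 => /andP[/eqP].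
Qed.

Lemma prod_dist_edge x z y : e x z -> prod_dist x y <= (prod_dist z y).+1.
Proof.
case/existsP => i /andP[hs /forallP hr].
rewrite (prod_dist_split x y i) (prod_dist_split z y i) -addSn.
have -> : \sum_(j < l | j != i) star_dist (x j) (y j) =
          \sum_(j < l | j != i) star_dist (z j) (y j).
  by apply: eq_bigr => j hj; have := hr j; rewrite hj => /eqP ->.
by rewrite leq_add2r; apply: star_dist_edge.
Qed.

Lemma set_coord_edge x a i :
  x i != a i -> (val (x i) == 0) || (val (a i) == 0) -> e x (set_coord x a i).
Proof.
move=> hne h0; apply/existsP; exists i; rewrite set_coordE eqxx /star_rel hne h0.
by apply/forallP => j; apply/implyP => hj; rewrite set_coordE (negbTE hj).
Qed.

Lemma geodesic_step x y : x != y ->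
  exists z, [/\ e x z, prod_dist x y = (prod_dist z y).+1
              & prod_dist c z <= maxn (prod_dist c x) (prod_dist c y)].
Proof.
move=> hxy.
have [/existsP[i /andP[hi hleaf]] | hcentral] :=
  boolP [exists i, (x i != y i) && (val (x i) != 0)].
- (* a disagreeing leaf coordinate of x moves to the center *)
  exists (set_coord x c i); split.
  + by apply: set_coord_edge; rewrite /star_prod_center ffunE //= orbT.
  + rewrite prod_dist_set_coord (prod_dist_split x y i) (star_dist_leaf hleaf hi).
    by rewrite /star_prod_center ffunE.
  + apply: leq_trans (leq_maxl _ _); apply: leq_sum => j _.
    by rewrite set_coordE; case: ifP => _ //; rewrite star_distxx.
- (* otherwise x is central wherever it disagrees with y, and copies a
     disagreeing coordinate of y *)
  have central j : x j != y j -> val (x j) == 0.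
    move=> hj; apply: contraNT hcentral => hleaf.
    by apply/existsP; exists j; rewrite hj hleaf.
  have [i hi] : exists i, x i != y i.
    apply/existsP; apply: contraNT hxy => /existsPn hall.
    by apply/eqP/ffunP => j; apply/eqP/negPn/hall.
  exists (set_coord x y i); split.
  + by apply: set_coord_edge; rewrite // central.
  + rewrite prod_dist_set_coord (prod_dist_split x y i) star_distxx.
    by rewrite (star_dist_center (central _ hi) hi).
  + apply: leq_trans (leq_maxr _ _); apply: leq_sum => j _.
    rewrite set_coordE; case: ifP => _ //.
    have [-> // | hj] := eqVneq (x j) (y j).
    by rewrite /star_prod_center ffunE star_dist_center0 // central.
Qed.

Definition prod_ball (k : nat) : {set V} := [set z | prod_dist c z <= k].

Lemma ball_geodesic k x y : x \in prod_ball k -> y \in prod_ball k ->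
  walkb (induced e (prod_ball k)) x y (prod_dist x y).
Proof.
move=> hx hy; move hd: (prod_dist x y) => d.
elim: d x hd hx => [|d IH] x hd hx.
  by apply/walkbP; exists [::]; split; rewrite //= (prod_dist_eq0 hd).
have hxy : x != y by apply/eqP => hxy; move: hd; rewrite hxy prod_distxx.
have [z [hxz hzd hzc]] := geodesic_step hxy.
have hz : z \in prod_ball k.
  by move: hx hy; rewrite !inE => hx hy; rewrite (leq_trans hzc) // geq_max hx.
have /walkbP[p [hs hp hl]] := IH z (succn_inj (etrans (esym hzd) hd)) hz.
by apply/walkbP; exists (z :: p); rewrite /= hs hl /induced hx hz hxz hp.
Qed.

Lemma star_prod_gdist x y : gdist e x y = Some (prod_dist x y).
Proof.
apply: (gdist_metric prod_distxx prod_dist_edge).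
apply: (walkb_sub (@induced_sub _ e (prod_ball (maxn (prod_dist c x) (prod_dist c y))))).
by apply: ball_geodesic; rewrite inE ?leq_maxl ?leq_maxr.
Qed.

Lemma nbhd_prod_ball k : nbhd e c k = prod_ball k.
Proof. by apply/setP => x; rewrite !inE star_prod_gdist. Qed.
End StarProduct.

Theorem lemma3p6 (l : nat) (n : 'I_l -> nat) (k : nat) :
  isometric_induced (star_prod_rel l n)
    (nbhd (star_prod_rel l n) (star_prod_center l n) k).
Proof.
rewrite nbhd_prod_ball.
apply: (isometric_of_geodesics (@prod_distxx l n) (@prod_dist_edge l n)).
exact: ball_geodesic.
Qed.
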